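(* Let $J$ be a $k$-graph on a vertex set $V$ and $M$ a perfect matching in $J$. Let $b,c,c' \in \mathbb N$ and $u, v \in V$ be such that $(J, M)$ contains a $b$-fold $(u,v)$-transferral of size $c$, and $(J, M)$ contains a simple $(v,u)$-transferral of size $c'$. Then $(J, M)$ contains a simple $(u,v)$-transferral of size $(b-1)c'+c$.
   Context: For $S\subseteq V$, $\chi(S)\in\mathbb R^{V}$ is its characteristic vector, and for a multiset $T$ of subsets, $\chi(T)=\sum_{e\in T}\chi(e)$ (with multiplicity). For $b\in\mathbb N$ and $u,v\in V$, a $b$-fold $(u,v)$-transferral in $(J,M)$ is a pair $(T,T')$ where $T$ is a multiset of edges of $J$ and $T'$ a multiset of edges of $M$ with $\chi(T)-\chi(T')=b(\chi(\{u\})-\chi(\{v\}))$; then $|T|=|T'|$, and this common value is its size. A simple transferral is a $1$-fold transferral. *)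

From mathcomp Require Import all_boot all_algebra.
Set Implicit Arguments. Unset Strict Implicit. Unset Printing Implicit Defensive.
Import GRing.Theory Num.Theory.
Local Open Scope ring_scope.

Definition kgraph (V : finType) (k : nat) (J : {set {set V}}) : Prop :=
  forall e, e \in J -> #|e| = k.

Definition perfect_matching (V : finType) (J M : {set {set V}}) : Prop :=
  [/\ M \subset J,
      (forall e f, e \in M -> f \in M -> e != f -> [disjoint e & f]) &
      (forall x : V, exists2 e, e \in M & x \in e)].

(* chi(T) evaluated at x, for a multiset T of edges (a seq, with multiplicity) *)
Definition chi (V : finType) (T : seq {set V}) (x : V) : int :=
  (count (fun e : {set V} => x \in e) T)%:Z.

Definition transferral (V : finType) (J M : {set {set V}}) (b : nat) (u v : V)
    (T T' : seq {set V}) : Prop :=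
  [/\ all (fun e : {set V} => e \in J) T, all (fun e : {set V} => e \in M) T' &
      forall x : V, chi T x - chi T' x =
        (b%:Z) * ((x == u)%:Z - (x == v)%:Z)].

Definition has_transferral (V : finType) (J M : {set {set V}}) (b : nat)
    (u v : V) (c : nat) : Prop :=
  exists T T', transferral J M b u v T T' /\ size T = c.

From mathcomp Require Import all_boot all_algebra.

Set Implicit Arguments.
Unset Strict Implicit.
Unset Printing Implicit Defensive.

Import GRing.Theory.

(* Transferrals add under concatenation of multisets and scale under
   repetition.  Repeating the simple (v,u)-transferral b - 1 times gives a
   (b-1)-fold (v,u)-transferral, i.e. a (1-b)-fold (u,v)-transferral, and
   adding the b-fold (u,v)-transferral leaves a simple (u,v)-transferral. *)

Lemma count_flatten_nseq (T : Type) (p : pred T) (n : nat) (s : seq T) :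
  count p (flatten (nseq n s)) = count p s * n.
Proof. by rewrite count_flatten map_nseq sumn_nseq. Qed.

Lemma size_flatten_nseq (T : Type) (n : nat) (s : seq T) :
  size (flatten (nseq n s)) = size s * n.
Proof. by rewrite -count_predT count_flatten_nseq count_predT. Qed.

Lemma all_flatten_nseq (T : Type) (p : pred T) (n : nat) (s : seq T) :
  all p s -> all p (flatten (nseq n s)).
Proof. by move=> ps; elim: n => //= n IH; rewrite all_cat ps IH. Qed.

Section Transferrals.

Variables (V : finType) (J M : {set {set V}}).

Local Open Scope ring_scope.

Lemma chi_cat (T S : seq {set V}) (x : V) :
  chi (T ++ S) x = chi T x + chi S x.
Proof. by rewrite /chi count_cat PoszD. Qed.

Lemma chi_flatten_nseq (n : nat) (T : seq {set V}) (x : V) :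
  chi (flatten (nseq n T)) x = chi T x * n%:Z.
Proof. by rewrite /chi count_flatten_nseq PoszM. Qed.

Lemma transferral_flatten_nseq (n b : nat) (u v : V) (T T' : seq {set V}) :
  transferral J M b u v T T' ->
  transferral J M (b * n) u v (flatten (nseq n T)) (flatten (nseq n T')).
Proof.
case=> JT MT' chiT; split; rewrite ?all_flatten_nseq // => x.
by rewrite !chi_flatten_nseq -mulrBl chiT PoszM mulrAC.
Qed.

Lemma transferral_cat_opposite (b b' : nat) (u v : V) (T T' S S' : seq {set V}) :
  (b' <= b)%N ->
  transferral J M b u v T T' -> transferral J M b' v u S S' ->
  transferral J M (b - b') u v (T ++ S) (T' ++ S').
Proof.
move=> le_b'b [JT MT' chiT] [JS MS' chiS]; split; rewrite ?all_cat ?JT ?JS ?MT' ?MS' //.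
move=> x; rewrite !chi_cat opprD addrACA chiT chiS -subzn // mulrBl.
by rewrite -mulrN opprB.
Qed.

End Transferrals.

Theorem lemma4p4 (V : finType) (k : nat) (J M : {set {set V}})
  (b c c' : nat) (u v : V) :
  (0 < b)%N ->
  kgraph k J -> perfect_matching J M ->
  has_transferral J M b u v c ->
  has_transferral J M 1 v u c' ->
  has_transferral J M 1 u v ((b - 1) * c' + c).
Proof.
move=> b_gt0 _ _ [T [T' [tr_uv sizeT]]] [S [S' [tr_vu sizeS]]].
have tr_vu_rep := transferral_flatten_nseq (b - 1) tr_vu.
rewrite mul1n in tr_vu_rep.
exists (T ++ flatten (nseq (b - 1) S)), (T' ++ flatten (nseq (b - 1) S')); split.
  by rewrite -{1}(subKn b_gt0); apply: transferral_cat_opposite; rewrite ?leq_subr.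
by rewrite size_cat size_flatten_nseq sizeT sizeS mulnC addnC.
Qed.
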